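(* Let $\mathcal C=\mathcal C(I,A,(\rho_i)_{i\in I},(C^a)_{a\in A})$ be a connected Cartan scheme and $\mathcal R=\mathcal R(\mathcal C,(R^a)_{a\in A})$ a root system of type $\mathcal C$. Let $a\in A$ and $i,j\in I$ with $m^a_{i,j}=3$. Then $c^{\rho_i(a)}_{il}+c^{\rho_i(a)}_{jl}=c^{\rho_i\rho_j(a)}_{il}+c^{\rho_i\rho_j(a)}_{jl}$ for all $l\in I$.
   Context: Let $I$ be a nonempty finite set and $\{\alpha_i\mid i\in I\}$ the standard basis of $\mathbb Z^I$; $\mathbb N_0=\{0,1,2,\dots\}$. A generalized Cartan matrix is $C=(c_{ij})_{i,j\in I}\in\mathbb Z^{I\times I}$ with $c_{ii}=2$, $c_{jk}\le0$ for $j\ne k$, and $c_{ij}=0\Rightarrow c_{ji}=0$. A Cartan scheme $\mathcal C=\mathcal C(I,A,(\rho_i)_{i\in I},(C^a)_{a\in A})$ consists of a nonempty set $A$, maps $\rho_i:A\to A$ and generalized Cartan matrices $C^a=(c^a_{jk})_{j,k\in I}$ such that (C1) $\rho_i^2=\mathrm{id}$ and (C2) $c^a_{ij}=c^{\rho_i(a)}_{ij}$ for all $a\in A$, $i,j\in I$. It is connected if the group generated by the $\rho_i$ acts transitively on $A$. For $i\in I$, $a\in A$ let $\sigma_i^a\in\mathrm{Aut}(\mathbb Z^I)$, $\sigma_i^a(\alpha_j)=\alpha_j-c^a_{ij}\alpha_i$. A root system of type $\mathcal C$ is a family $\mathcal R=\mathcal R(\mathcal C,(R^a)_{a\in A})$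 of subsets $R^a\subset\mathbb Z^I$ such that, writing $R^a_+=R^a\cap\mathbb N_0^I$ and $m^a_{i,j}=|R^a\cap(\mathbb N_0\alpha_i+\mathbb N_0\alpha_j)|$, for all $a\in A$, $i,j\in I$: (R1) $R^a=R^a_+\cup(-R^a_+)$; (R2) $R^a\cap\mathbb Z\alpha_i=\{\alpha_i,-\alpha_i\}$; (R3) $\sigma_i^a(R^a)=R^{\rho_i(a)}$; (R4) if $i\neq j$ and $m^a_{i,j}$ is finite then $(\rho_i\rho_j)^{m^a_{i,j}}(a)=a$. *)

From mathcomp Require Import all_boot all_order all_algebra.
Set Implicit Arguments. Unset Strict Implicit. Unset Printing Implicit Defensive.
Import Order.TTheory GRing.Theory Num.Theory.
Local Open Scope ring_scope.

(* Z^I is represented by {ffun I -> int}; alpha i is the standard basis vector. *)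
Definition alpha (I : finType) (i : I) : {ffun I -> int} :=
  [ffun k => ((k == i) : nat)%:Z].

Definition vopp (I : finType) (v : {ffun I -> int}) : {ffun I -> int} :=
  [ffun k => - v k].

Definition nonneg_vec (I : finType) (v : {ffun I -> int}) : Prop :=
  forall k, 0 <= v k.

Definition is_gcm (I : finType) (c : I -> I -> int) : Prop :=
  (forall i, c i i = 2) /\
  (forall j k, j != k -> c j k <= 0) /\
  (forall i j, c i j = 0 -> c j i = 0).

Definition cartan_scheme (I : finType) (A : Type) (rho : I -> A -> A)
    (C : A -> I -> I -> int) : Prop :=
  (0 < #|I|)%N /\ inhabited A /\
  (forall a, is_gcm (C a)) /\
  (forall i a, rho i (rho i a) = a) /\
  (forall a i j, C a i j = C (rho i a) i j).

Definition rho_word (I : finType) (A : Type) (rho : I -> A -> A)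
    (w : seq I) (a : A) : A := foldr (fun i b => rho i b) a w.

(* connected: the group generated by the rho_i acts transitively on A
   (the rho_i are involutions, so this group consists of the words). *)
Definition connected_scheme (I : finType) (A : Type) (rho : I -> A -> A) : Prop :=
  forall a b : A, exists w : seq I, rho_word rho w a = b.

(* sigma_i^a(alpha_j) = alpha_j - c^a_{ij} alpha_i, extended Z-linearly *)
Definition sigma (I : finType) (A : Type) (C : A -> I -> I -> int)
    (i : I) (a : A) (v : {ffun I -> int}) : {ffun I -> int} :=
  [ffun k => v k - ((k == i) : nat)%:Z * (\sum_(j : I) C a i j * v j)].

Definition card_eq (T : eqType) (P : T -> Prop) (n : nat) : Prop :=
  exists s : seq T, uniq s /\ size s = n /\ (forall x, P x <-> x \in s).

Definition m_set (I : finType) (A : Type) (R : A -> {ffun I -> int} -> Prop)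
    (a : A) (i j : I) (v : {ffun I -> int}) : Prop :=
  R a v /\ exists p q : nat, v = [ffun k => p%:Z * alpha i k + q%:Z * alpha j k].

Definition root_system (I : finType) (A : Type) (rho : I -> A -> A)
    (C : A -> I -> I -> int) (R : A -> {ffun I -> int} -> Prop) : Prop :=
  (forall a v, R a v <-> ((R a v /\ nonneg_vec v) \/
                          (R a (vopp v) /\ nonneg_vec (vopp v)))) /\
  (forall a i (z : int), R a [ffun k => z * alpha i k] <-> (z = 1 \/ z = -1)) /\
  (forall a i v, R (rho i a) v <-> exists2 w, R a w & sigma C i a w = v) /\
  (forall a i j (n : nat), i != j -> card_eq (m_set R a i j) n ->
     iter n (fun b => rho i (rho j b)) a = a).

From mathcomp Require Import all_boot all_order all_algebra.
From mathcomp Require Import zify.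
Set Implicit Arguments. Unset Strict Implicit. Unset Printing Implicit Defensive.
Import Order.TTheory GRing.Theory Num.Theory.
Local Open Scope ring_scope.

(* If m^a_{ij} = 3, the positive roots of R^a in N0 alpha_i + N0 alpha_j are
   alpha_i, alpha_j and alpha_i + alpha_j, so c^a_{ij} = c^a_{ji} = -1; both
   properties propagate along rho_i and rho_j, hence hold on the whole hexagon
   a, rho_i a, rho_j rho_i a, ... which closes because (rho_i rho_j)^3 a = a by (R4).
   For l outside {i, j}, carry the simple root alpha_l of rho_i a once around the
   hexagon in each direction by six alternating reflections.  Both results are
   roots of rho_i a with alpha_l-coefficient 1, hence nonnegative, but their
   alpha_i- and alpha_j-coefficients are opposite linear expressions in the
   entries c_{il}, c_{jl} along the hexagon; so these vanish, which is the
   claimed identity. *)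

Lemma card_eq_notin (T : eqType) (P : T -> Prop) n (t : seq T) :
  card_eq P n -> (size t < n)%N -> exists2 x, P x & x \notin t.
Proof.
case=> s [us [<- Ps]] lt_t_s.
have /allPn [x s_x t'x] : ~~ all [in t] s.
  by apply: contraTN lt_t_s => /allP/(uniq_leq_size us); rewrite leqNgt.
by exists x => //; exact/(Ps x).
Qed.

Lemma card_eq_uniq_leq (T : eqType) (P : T -> Prop) n (t : seq T) :
  card_eq P n -> uniq t -> (forall x, x \in t -> P x) -> (size t <= n)%N.
Proof.
by case=> s [_ [<- Ps]] ut tP; apply: uniq_leq_size ut _ => x /tP /Ps.
Qed.

Lemma iter_involutive_conj (A : Type) (f g : A -> A) n x : involutive f ->
  iter n (fun y => g (f y)) (f x) = f (iter n (fun y => f (g y)) x).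
Proof. by move=> fK; elim: n => [|n IHn] //=; rewrite IHn fK. Qed.

Lemma iter_involutive_cancel (A : Type) (f g : A -> A) n x :
  involutive f -> involutive g ->
  iter n (fun y => g (f y)) (iter n (fun y => f (g y)) x) = x.
Proof.
by move=> fK gK; elim: n x => [|n IHn] x //; rewrite iterSr iterS fK gK IHn.
Qed.

Definition comb (I : finType) (l i j : I) (x p q : int) : {ffun I -> int} :=
  [ffun k => x * alpha l k + p * alpha i k + q * alpha j k].

Definition comb2 (I : finType) (i j : I) (p q : int) : {ffun I -> int} :=
  [ffun k => p * alpha i k + q * alpha j k].

Section Combinations.
Variable I : finType.
Implicit Types (l i j k : I) (x p q : int).

Lemma combE l i j x p q k :
  comb l i j x p q k = x * (k == l)%:Z + p * (k == i)%:Z + q * (k == j)%:Z.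
Proof. by rewrite /comb /alpha !ffunE. Qed.

Lemma combC l i j x p q : comb l i j x p q = comb l j i x q p.
Proof. by apply/ffunP => k; rewrite !combE; lia. Qed.

Lemma comb2E l i j p q : comb2 i j p q = comb l i j 0 p q.
Proof. by apply/ffunP => k; rewrite combE /alpha !ffunE; lia. Qed.

Lemma comb2C i j p q : comb2 i j p q = comb2 j i q p.
Proof. by rewrite !(comb2E i) combC. Qed.

Lemma comb_simple l i j : comb l i j 1 0 0 = [ffun k => 1 * alpha l k].
Proof. by apply/ffunP => k; rewrite combE /alpha !ffunE; lia. Qed.

Lemma comb2_simple i j p : comb2 i j p 0 = [ffun k => p * alpha i k].
Proof. by apply/ffunP => k; rewrite /comb2 /alpha !ffunE; lia. Qed.

Lemma comb2_diag i p q : comb2 i i p q = comb2 i i (p + q) 0.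
Proof. by apply/ffunP => k; rewrite /comb2 /alpha !ffunE; lia. Qed.

Lemma comb_l l i j x p q : l != i -> l != j -> comb l i j x p q l = x.
Proof. by move=> /negbTE li /negbTE lj; rewrite combE eqxx li lj; lia. Qed.

Lemma comb_i l i j x p q : l != i -> i != j -> comb l i j x p q i = p.
Proof. by move=> li /negbTE ij; rewrite combE eqxx eq_sym (negbTE li) ij; lia. Qed.

Lemma comb2_i i j p q : i != j -> comb2 i j p q i = p.
Proof. by move=> /negbTE ij; rewrite (comb2E i) combE eqxx ij; lia. Qed.

Lemma comb2_eqE i j p q p' q' : i != j ->
  (comb2 i j p q == comb2 i j p' q') = (p == p') && (q == q').
Proof.
move=> ij; apply/eqP/andP => [E|[/eqP-> /eqP->]] //.
have := congr1 (fun v : {ffun I -> int} => v i) E.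
have := congr1 (fun v : {ffun I -> int} => v j) E.
by rewrite !comb2_i // ![comb2 i j _ _]comb2C !comb2_i 1?eq_sym // => -> ->.
Qed.

Lemma sum_mul_delta (F : I -> int) l : \sum_k F k * (k == l)%:Z = F l.
Proof.
by rewrite (bigD1 l) //= eqxx mulr1 big1 ?addr0 // => k /negbTE->; rewrite mulr0.
Qed.

Lemma sigma_comb (A : Type) (C : A -> I -> I -> int) b l i j x p q :
  sigma C i b (comb l i j x p q) =
  comb l i j x (p - (x * C b i l + p * C b i i + q * C b i j)) q.
Proof.
apply/ffunP => k; rewrite /sigma ffunE !combE.
have -> : \sum_m C b i m * comb l i j x p q m = x * C b i l + p * C b i i + q * C b i j.
  under eq_bigr => m _ do rewrite combE !mulrDr !mulrA.
  rewrite !big_split /= !sum_mul_delta; lia.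
lia.
Qed.

End Combinations.

Section RootSystem.
Variables (I : finType) (A : Type) (rho : I -> A -> A) (C : A -> I -> I -> int).
Variable R : A -> {ffun I -> int} -> Prop.
Hypotheses (HC : cartan_scheme rho C) (HR : root_system rho C R).
Implicit Types (b : A) (i j l : I) (x p q : int).

Lemma rhoK i : involutive (rho i).
Proof. by have [_ [_ [_ [K _]]]] := HC; exact: K. Qed.

Lemma cartan_diag b i : C b i i = 2.
Proof. by have [_ [_ [gcm _]]] := HC; have [] := gcm b. Qed.

Lemma cartan_rho b i j : C (rho i b) i j = C b i j.
Proof. by have [_ [_ [_ [_ E]]]] := HC; rewrite -E. Qed.

Lemma cartan_le0 b i j : i != j -> C b i j <= 0.
Proof. by have [_ [_ [gcm _]]] := HC; have [_ []] := gcm b; auto. Qed.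

Lemma cartan_eq0_sym b i j : C b i j = 0 -> C b j i = 0.
Proof. by have [_ [_ [gcm _]]] := HC; have [_ []] := gcm b; auto. Qed.

Lemma root_sign b v k : R b v -> 0 < v k -> forall k', 0 <= v k'.
Proof.
have [R1 _] := HR; move=> Rv vk_gt0 k'.
case: (proj1 (R1 b v) Rv) => [[_ /(_ k')] //|[_ neg_v]].
by have := neg_v k; rewrite /vopp ffunE; lia.
Qed.

Lemma root_simple b i z : R b [ffun k => z * alpha i k] <-> z = 1 \/ z = -1.
Proof. by have [_ [R2 _]] := HR; exact: R2. Qed.

Lemma root_reflect b i v : R b v -> R (rho i b) (sigma C i b v).
Proof. by have [_ [_ [R3 _]]] := HR => Rv; apply/R3; exists v. Qed.

Lemma root_comb_reflect_i b l i j x p q : R b (comb l i j x p q) ->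
  R (rho i b) (comb l i j x (- p - x * C b i l - q * C b i j) q).
Proof.
move/(root_reflect i); rewrite sigma_comb cartan_diag.
by congr (R _ (comb _ _ _ _ _ _)); lia.
Qed.

Lemma root_comb_reflect_j b l i j x p q : R b (comb l i j x p q) ->
  R (rho j b) (comb l i j x p (- q - x * C b j l - p * C b j i)).
Proof. by rewrite combC [comb l i j x p _]combC; exact: root_comb_reflect_i. Qed.

Lemma root_comb2_reflect_i b i j p q : R b (comb2 i j p q) ->
  R (rho i b) (comb2 i j (- p - q * C b i j) q).
Proof.
rewrite !(comb2E i) => /root_comb_reflect_i.
by congr (R _ (comb _ _ _ _ _ _)); lia.
Qed.

Lemma root_comb_ge0 b l i j x p q : l != i -> l != j -> i != j ->
  R b (comb l i j x p q) -> 0 < x -> 0 <= p /\ 0 <= q.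
Proof.
move=> li lj ij Rv x_gt0.
have := root_sign Rv (k := l); rewrite comb_l // => /(_ x_gt0) v_ge0.
have ji : j != i by rewrite eq_sym.
by split; [have := v_ge0 i; rewrite comb_i | have := v_ge0 j; rewrite combC comb_i].
Qed.

Lemma root_comb2_ge0 b i j p q : i != j -> R b (comb2 i j p q) -> 0 < q -> 0 <= p.
Proof.
move=> ij Rv q_gt0; have ji : j != i by rewrite eq_sym.
have := root_sign Rv (k := j); rewrite comb2C comb2_i //.
by move=> /(_ q_gt0) /(_ i); rewrite -comb2C comb2_i.
Qed.

Lemma root_comb2_i b i j : R b (comb2 i j 1 0).
Proof. by rewrite comb2_simple; apply/root_simple; left. Qed.

Lemma root_comb2_j b i j : R b (comb2 i j 0 1).
Proof. by rewrite comb2C; exact: root_comb2_i. Qed.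

Lemma root_comb2_i0 b i j p : R b (comb2 i j p 0) -> 0 <= p -> p = 1.
Proof. by rewrite comb2_simple => /root_simple; lia. Qed.

Lemma root_comb2_0j b i j q : R b (comb2 i j 0 q) -> 0 <= q -> q = 1.
Proof. by rewrite comb2C; exact: root_comb2_i0. Qed.

Lemma root_comb_l b l i j : R b (comb l i j 1 0 0).
Proof. by rewrite comb_simple; apply/root_simple; left. Qed.

Lemma root_comb1_reflect_i b l i j p q : C b i j = -1 ->
  R b (comb l i j 1 p q) -> R (rho i b) (comb l i j 1 (q - p - C b i l) q).
Proof.
by move=> cij /root_comb_reflect_i; rewrite cij; congr (R _ (comb _ _ _ _ _ _)); lia.
Qed.

Lemma root_comb1_reflect_j b l i j p q : C b j i = -1 ->
  R b (comb l i j 1 p q) -> R (rho j b) (comb l i j 1 p (p - q - C b j l)).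
Proof.
by move=> cji /root_comb_reflect_j; rewrite cji; congr (R _ (comb _ _ _ _ _ _)); lia.
Qed.

(* This root is [sigma_j] applied to [alpha_i] at [rho j b]. *)
Lemma root_comb2_cartan b i j : R b (comb2 i j 1 (- C b j i)).
Proof.
have := root_comb2_reflect_i (root_comb2_j (rho j b) j i).
by rewrite rhoK cartan_rho comb2C; congr (R _ (comb2 _ _ _ _)); lia.
Qed.

Lemma m_setE b i j v : m_set R b i j v <->
  exists p q, [/\ 0 <= p, 0 <= q, v = comb2 i j p q & R b v].
Proof.
split=> [[Rv [p [q Ev]]]|[p [q [p_ge0 q_ge0 -> Rv]]]].
  by exists p%:Z, q%:Z; split.
split=> //; exists `|p|%N, `|q|%N.
by rewrite !gez0_abs.
Qed.

Lemma m_set_comb2 b i j p q : 0 <= p -> 0 <= q -> R b (comb2 i j p q) ->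
  m_set R b i j (comb2 i j p q).
Proof. by move=> p_ge0 q_ge0 Rv; apply/m_setE; exists p, q. Qed.

Definition A2_at b i j : Prop :=
  [/\ C b i j = -1, C b j i = -1 &
      forall p q, 0 <= p -> 0 <= q -> R b (comb2 i j p q) ->
        (p = 1 /\ q = 0) \/ (p = 0 /\ q = 1) \/ (p = 1 /\ q = 1)].

Section RankTwoWithThreeRoots.
Variables (b : A) (i j : I).
Hypothesis m3 : card_eq (m_set R b i j) 3.

Lemma m3_neq : i != j.
Proof.
apply/eqP => eq_ij; have m3i := m3; rewrite -eq_ij in m3i.
have [v /m_setE [p [q [p_ge0 q_ge0 -> Rv]]]] :=
  card_eq_notin (t := [:: comb2 i i 1 0]) m3i erefl.
by rewrite comb2_diag in Rv *; rewrite (root_comb2_i0 Rv) ?addr_ge0 // inE eqxx.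
Qed.

Lemma m3_cartan_neq0 : C b i j != 0.
Proof.
have ij := m3_neq; apply/eqP => c0.
have [v /m_setE [p [q [p_ge0 q_ge0 -> Rv]]]] :=
  card_eq_notin (t := [:: comb2 i j 1 0; comb2 i j 0 1]) m3 erefl.
rewrite !inE !comb2_eqE // => /norP [pq_ne10 pq_ne01].
have q_gt0 : 0 < q.
  rewrite lt0r q_ge0 andbT; apply: contra pq_ne10 => /eqP q0; rewrite q0 in Rv.
  by rewrite (root_comb2_i0 Rv p_ge0) q0 !eqxx.
have := root_comb2_ge0 ij (root_comb2_reflect_i Rv) q_gt0.
rewrite c0 mulr0 subr0 oppr_ge0 => p_le0; have p0 : p = 0 by lia.
by rewrite p0 in Rv pq_ne01; rewrite (root_comb2_0j Rv q_ge0) !eqxx in pq_ne01.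
Qed.

Lemma m3_cartan : C b i j = -1 /\ C b j i = -1.
Proof.
have ij := m3_neq; have ji : j != i by rewrite eq_sym.
have cij_lt0 : C b i j < 0 by rewrite lt_neqAle m3_cartan_neq0 cartan_le0.
have cji_lt0 : C b j i < 0.
  rewrite lt_neqAle cartan_le0 // andbT.
  by apply: contra m3_cartan_neq0 => /eqP/cartan_eq0_sym ->.
set t := [:: comb2 i j 1 0; comb2 i j 0 1;
             comb2 i j 1 (- C b j i); comb2 i j (- C b i j) 1].
have r2 : R b (comb2 i j (- C b i j) 1) by rewrite comb2C; exact: root_comb2_cartan.
have t_roots v : v \in t -> m_set R b i j v.
  rewrite !inE => /or4P [] /eqP ->.
  - exact: m_set_comb2 (root_comb2_i _ _ _).
  - exact: m_set_comb2 (root_comb2_j _ _ _).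
  - by apply: m_set_comb2 (root_comb2_cartan _ _ _); rewrite // oppr_ge0 ltW.
  - by apply: m_set_comb2 r2; rewrite // oppr_ge0 ltW.
suff : ~~ uniq t by rewrite /= !inE !comb2_eqE //; lia.
by apply/negP => /(card_eq_uniq_leq m3)/(_ t_roots).
Qed.

Lemma m3_roots p q : 0 <= p -> 0 <= q -> R b (comb2 i j p q) ->
  (p = 1 /\ q = 0) \/ (p = 0 /\ q = 1) \/ (p = 1 /\ q = 1).
Proof.
move=> p_ge0 q_ge0 Rpq; have ij := m3_neq; have [_ cji] := m3_cartan.
set t := [:: comb2 i j 1 0; comb2 i j 0 1; comb2 i j 1 1; comb2 i j p q].
have r3 : R b (comb2 i j 1 1).
  by rewrite -[X in comb2 _ _ _ X]opprK -cji; exact: root_comb2_cartan.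
have t_roots v : v \in t -> m_set R b i j v.
  rewrite !inE => /or4P [] /eqP ->.
  - exact: m_set_comb2 (root_comb2_i _ _ _).
  - exact: m_set_comb2 (root_comb2_j _ _ _).
  - exact: m_set_comb2 r3.
  - exact: m_set_comb2 Rpq.
suff : ~~ uniq t by rewrite /= !inE !comb2_eqE //; lia.
by apply/negP => /(card_eq_uniq_leq m3)/(_ t_roots).
Qed.

Lemma A2_at_m3 : A2_at b i j.
Proof. by have [cij cji] := m3_cartan; split => //; exact: m3_roots. Qed.

End RankTwoWithThreeRoots.

Lemma A2_at_sym b i j : A2_at b i j -> A2_at b j i.
Proof.
case=> cij cji roots; split=> // p q p_ge0 q_ge0; rewrite comb2C.
by move/(roots _ _ q_ge0 p_ge0); lia.
Qed.

Lemma A2_at_rho_i b i j : i != j -> A2_at b i j -> A2_at (rho i b) i j.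
Proof.
move=> ij [cij cji roots]; have cij' : C (rho i b) i j = -1 by rewrite cartan_rho.
have cji'_lt0 : C (rho i b) j i < 0.
  rewrite lt_neqAle cartan_le0 1?eq_sym // andbT.
  by apply/eqP => c0; have := cartan_eq0_sym (esym c0); rewrite cij'.
have cji' : C (rho i b) j i = -1.
  have := root_comb2_reflect_i (root_comb2_cartan (rho i b) i j).
  rewrite rhoK cij' => /roots; lia.
split=> // p q p_ge0 q_ge0 Rpq.
have := root_comb2_reflect_i Rpq; rewrite rhoK cij' => R'.
have [q0|q_neq0] := eqVneq q 0.
  by rewrite q0 in Rpq; have := root_comb2_i0 Rpq p_ge0; lia.
have qp_ge0 : 0 <= - p - q * -1 by apply: root_comb2_ge0 ij R' _; lia.
by have := roots _ _ qp_ge0 q_ge0 R'; lia.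
Qed.

Lemma A2_at_rho_j b i j : i != j -> A2_at b i j -> A2_at (rho j b) i j.
Proof.
by move=> ij /A2_at_sym A2; apply/A2_at_sym/A2_at_rho_i; rewrite // eq_sym.
Qed.

Lemma hexagon_root b i j l : i != j -> A2_at b i j ->
  iter 3 (fun c => rho j (rho i c)) b = b ->
  let b1 := rho i b in let b2 := rho j b1 in let b3 := rho i b2 in
  let b4 := rho j b3 in let b5 := rho i b4 in
  R b (comb l i j 1 (C b i l + C b1 j l - C b3 j l - C b4 i l)
                    (C b2 i l + C b1 j l - C b4 i l - C b5 j l)).
Proof.
move=> ij A2_0 hex b1 b2 b3 b4 b5.
have A2_1 := A2_at_rho_i ij A2_0; have A2_2 := A2_at_rho_j ij A2_1.
have A2_3 := A2_at_rho_i ij A2_2; have A2_4 := A2_at_rho_j ij A2_3.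
have A2_5 := A2_at_rho_i ij A2_4.
case: A2_0 A2_1 A2_2 A2_3 A2_4 A2_5
  => [c0 _ _] [_ c1 _] [c2 _ _] [_ c3 _] [c4 _ _] [_ c5 _].
have := root_comb1_reflect_i c0 (root_comb_l b l i j).
move=> /(root_comb1_reflect_j c1) /(root_comb1_reflect_i c2) /(root_comb1_reflect_j c3).
move=> /(root_comb1_reflect_i c4) /(root_comb1_reflect_j c5); rewrite [rho j b5]hex.
by congr (R _ (comb _ _ _ _ _ _)); rewrite /b5 /b4 /b3 /b2 /b1; lia.
Qed.

Lemma hexagon_cartan_sum a i j l : i != j -> A2_at a i j ->
  iter 3 (fun b => rho i (rho j b)) a = a ->
  C (rho i a) i l + C (rho i a) j l = C (rho i (rho j a)) i l + C (rho i (rho j a)) j l.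
Proof.
move=> ij A2 hex; have ji : j != i by rewrite eq_sym.
have A2_i := A2_at_rho_i ij A2.
have [cij cji _] := A2_at_rho_i ij (A2_at_rho_j ij A2).
have [-> | li] := eqVneq l i; first by case: A2_i => _ -> _; rewrite !cartan_diag cji.
have [-> | lj] := eqVneq l j; first by case: A2_i => -> _ _; rewrite !cartan_diag cij.
have hex_ji : iter 3 (fun b => rho j (rho i b)) (rho i a) = rho i a.
  by rewrite iter_involutive_conj ?hex //; exact: rhoK.
have hex_ij : iter 3 (fun b => rho i (rho j b)) (rho i a) = rho i a.
  by rewrite -{1}hex_ji iter_involutive_cancel //; exact: rhoK.
have := root_comb_ge0 li lj ij (hexagon_root l ij A2_i hex_ji) ltr01.
have := root_comb_ge0 lj li ji (hexagon_root l ji (A2_at_sym A2_i) hex_ij) ltr01.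
have e1 : rho j (rho i (rho j a)) = rho i (rho j (rho i a)).
  by have /= := congr1 (fun b => rho i (rho j (rho i b))) hex; rewrite !rhoK.
have f_i : C (rho j (rho i (rho j a))) i l = C (rho j (rho i a)) i l.
  by rewrite e1 cartan_rho.
have f_j : C (rho i (rho j (rho i (rho j a)))) j l = C (rho i a) j l.
  by rewrite e1 rhoK cartan_rho.
rewrite !rhoK -!e1 !rhoK f_i f_j !cartan_rho; lia.
Qed.

End RootSystem.

Theorem lemma4p9 (I : finType) (A : Type) (rho : I -> A -> A)
    (C : A -> I -> I -> int) (R : A -> {ffun I -> int} -> Prop)
    (HC : cartan_scheme rho C) (Hconn : connected_scheme rho)
    (HR : root_system rho C R)
    (a : A) (i j : I) (Hm : card_eq (m_set R a i j) 3) :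
  forall l : I,
    C (rho i a) i l + C (rho i a) j l = C (rho i (rho j a)) i l + C (rho i (rho j a)) j l.
Proof.
have ij := m3_neq HR Hm.
have hex : iter 3 (fun b => rho i (rho j b)) a = a.
  by have [_ [_ [_ R4]]] := HR; exact: R4 ij Hm.
move=> l; exact (hexagon_cartan_sum HC HR l ij (A2_at_m3 HC HR Hm) hex).
Qed.
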